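(* Let $G$ be a metabelian group (i.e. $G''=1$) with $G/G'\cong\mathbb{Z}$, and let $a,b\in G$ be such that the abelianization map $G\to G/G'$ sends $a$ and $b$ to the same generator of $\mathbb{Z}$. Then $a$ is conjugate to $b$ in $G$. *)

From Stdlib Require Import ZArith.
Open Scope Z_scope.

Set Implicit Arguments.

Record is_group (G : Type) (mul : G -> G -> G) (e : G) (inv : G -> G) : Prop := {
  grp_assoc : forall x y z, mul x (mul y z) = mul (mul x y) z;
  grp_mul1g : forall x, mul e x = x;
  grp_mulg1 : forall x, mul x e = x;
  grp_mulVg : forall x, mul (inv x) x = e;
  grp_mulgV : forall x, mul x (inv x) = e
}.

Section GroupDefs.
Variables (G : Type) (mul : G -> G -> G) (e : G) (inv : G -> G).

Inductive gen (X : G -> Prop) : G -> Prop :=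
  | gen_in : forall x, X x -> gen X x
  | gen_one : gen X e
  | gen_mul : forall x y, gen X x -> gen X y -> gen X (mul x y)
  | gen_inv : forall x, gen X x -> gen X (inv x).

Definition comm (x y : G) : G := mul (mul (mul (inv x) (inv y)) x) y.

Definition derived (S : G -> Prop) : G -> Prop :=
  gen (fun z => exists x y, S x /\ S y /\ z = comm x y).

Definition derived1 : G -> Prop := derived (fun _ => True).
Definition derived2 : G -> Prop := derived derived1.

Definition metabelian : Prop := forall z, derived2 z -> z = e.

Definition hom_to_Z (phi : G -> Z) : Prop :=
  forall x y, phi (mul x y) = phi x + phi y.

Definition conjugate (x y : G) : Prop :=
  exists g, y = mul (mul (inv g) x) g.

End GroupDefs.

(* Let K be the kernel of phi; it is G', hence abelian as G'' = 1. Because K is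
   abelian, d |-> [a, d] is a homomorphism on K, so [a, K] is a subgroup; it is
   normal because conjugation by g and by a commute on K (ag and ga differ by an
   element of K, which centralizes K). Since a and K generate G, the identity
   [x, y a] = [x, a] [x, y]^a puts every commutator in [a, K], so G' = [a, K].
   Finally a^-1 b lies in G', so a^-1 b = [a, d] = a^-1 d^-1 a d for some d,
   i.e. b = d^-1 a d. *)

From Stdlib Require Import ZArith Lia.
Open Scope Z_scope.
Set Implicit Arguments.

Declare Scope group_scope.

Section Group.
Variables (G : Type) (mul : G -> G -> G) (e : G) (inv : G -> G).
Hypothesis HG : is_group mul e inv.

Local Infix "*" := mul : group_scope.
Local Notation "x ^-1" := (inv x) (at level 3, left associativity, format "x ^-1") : group_scope.
Local Notation "[ ~ x , y ]" := (comm mul inv x y) (format "[ ~  x ,  y ]") : group_scope.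
Local Open Scope group_scope.

Let mulgA := grp_assoc HG.
Let mul1g := grp_mul1g HG.
Let mulg1 := grp_mulg1 HG.
Let mulVg := grp_mulVg HG.
Let mulgV := grp_mulgV HG.

Lemma mulKg x y : x^-1 * (x * y) = y.
Proof. rewrite mulgA, mulVg, mul1g; reflexivity. Qed.

Lemma mulKVg x y : x * (x^-1 * y) = y.
Proof. rewrite mulgA, mulgV, mul1g; reflexivity. Qed.

Lemma mulgKV x y : x * y^-1 * y = x.
Proof. rewrite <- mulgA, mulVg, mulg1; reflexivity. Qed.

Lemma invg_unique x y : x * y = e -> x^-1 = y.
Proof. intro Hxy. rewrite <- (mulg1 x^-1), <- Hxy, mulKg; reflexivity. Qed.

Lemma invMg x y : (x * y)^-1 = y^-1 * x^-1.
Proof. apply invg_unique. rewrite <- mulgA, mulKVg, mulgV; reflexivity. Qed.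

Lemma invgK x : x^-1^-1 = x.
Proof. apply invg_unique, mulVg. Qed.

Ltac gsimpl :=
  repeat progress (rewrite ?invMg, ?invgK; repeat rewrite <- mulgA;
                   rewrite ?mulKg, ?mulKVg, ?mulVg, ?mulgV, ?mulg1, ?mul1g).

Definition conjg (g x : G) : G := g^-1 * (x * g).

Lemma conjgM x y m : conjg (x * y) m = conjg y (conjg x m).
Proof. unfold conjg; gsimpl; reflexivity. Qed.

Lemma conjMg g x y : conjg g (x * y) = conjg g x * conjg g y.
Proof. unfold conjg; gsimpl; reflexivity. Qed.

Lemma conjVg g x : conjg g x^-1 = (conjg g x)^-1.
Proof. unfold conjg; gsimpl; reflexivity. Qed.

Lemma conjgK g x : conjg g^-1 (conjg g x) = x.
Proof. unfold conjg; gsimpl; reflexivity. Qed.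

Lemma commgC x y : x * y = y * x * [~ x, y].
Proof. unfold comm; gsimpl; reflexivity. Qed.

Lemma invg_comm x y : [~ x, y]^-1 = [~ y, x].
Proof. unfold comm; gsimpl; reflexivity. Qed.

Lemma commgE x y : [~ x, y] = conjg x y^-1 * y.
Proof. unfold comm, conjg; gsimpl; reflexivity. Qed.

Lemma commgMr x y z : [~ x, y * z] = [~ x, z] * conjg z [~ x, y].
Proof. unfold comm, conjg; gsimpl; reflexivity. Qed.

Lemma conjg_mulR x y : conjg y x = x * [~ x, y].
Proof. unfold comm, conjg; gsimpl; reflexivity. Qed.

Lemma commg1_of_commute x y : x * y = y * x -> [~ x, y] = e.
Proof. intro Hxy. unfold comm. rewrite <- (mulgA _ x y), Hxy. gsimpl; reflexivity. Qed.

Lemma commgg x : [~ x, x] = e.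
Proof. unfold comm; gsimpl; reflexivity. Qed.

Lemma derived1_commute :
  metabelian mul e inv ->
  forall x y, derived1 mul e inv x -> derived1 mul e inv y -> x * y = y * x.
Proof.
  intros Hmeta x y Hx Hy.
  rewrite commgC, (Hmeta [~ x, y]), mulg1; [reflexivity |].
  apply gen_in; exists x, y; auto.
Qed.

Section HomToZ.
Variable phi : G -> Z.
Hypothesis Hphi : hom_to_Z mul phi.

Lemma phi1 : phi e = 0.
Proof. pose proof (Hphi e e) as H. rewrite mul1g in H. lia. Qed.

Lemma phiV x : phi x^-1 = - phi x.
Proof. pose proof (Hphi x^-1 x) as H. rewrite mulVg, phi1 in H. lia. Qed.

Lemma phi_conjg g x : phi (conjg g x) = phi x.
Proof. unfold conjg. rewrite !Hphi, phiV. lia. Qed.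

Variable a : G.
Hypothesis Ha : phi a = 1 \/ phi a = -1.

Lemma phi_ind (P : G -> Prop) :
  (forall x, phi x = 0 -> P x) -> (forall x, P x <-> P (x * a)) -> forall x, P x.
Proof.
  intros P0 Pa.
  assert (Hu : exists u, phi u = 1 /\ forall x, P x <-> P (x * u)).
  { destruct Ha as [Ha1 | Ha1]; [exists a; auto |].
    exists a^-1; split; [rewrite phiV; lia |].
    intro x. rewrite (Pa (x * a^-1)). gsimpl. tauto. }
  destruct Hu as [u [Hu Pu]].
  enough (Hn : forall n x, phi x = n -> P x) by eauto.
  intro n; induction n using Z.peano_ind; intros x Hx.
  - auto.
  - rewrite <- (mulgKV x u). apply (Pu (x * u^-1)), IHn. rewrite Hphi, phiV; lia.
  - apply Pu, IHn. rewrite Hphi; lia.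
Qed.

Hypothesis ker_abelian : forall x y, phi x = 0 -> phi y = 0 -> x * y = y * x.

Definition comm_a_ker (z : G) : Prop := exists d, phi d = 0 /\ z = [~ a, d].

Lemma conjg_ker_id c m : phi c = 0 -> phi m = 0 -> conjg c m = m.
Proof. intros Hc Hm. unfold conjg. rewrite (ker_abelian Hm Hc). gsimpl; reflexivity. Qed.

Lemma conjg_conjg_a g m : phi m = 0 -> conjg g (conjg a m) = conjg a (conjg g m).
Proof.
  intro Hm. rewrite <- !conjgM.
  assert (Hga : g * a = a * g * ((a * g)^-1 * (g * a))) by (gsimpl; reflexivity).
  rewrite Hga, (conjgM (a * g)), (@conjg_ker_id ((a * g)^-1 * (g * a))); [reflexivity | |].
  - rewrite !Hphi, phiV, !Hphi. lia.
  - rewrite phi_conjg. exact Hm.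
Qed.

Lemma comm_a_mul d d' : phi d = 0 -> phi d' = 0 -> [~ a, d * d'] = [~ a, d] * [~ a, d'].
Proof.
  intros Hd Hd'.
  assert (HA : phi (conjg a d^-1) = 0) by (rewrite phi_conjg, phiV; lia).
  assert (HA' : phi (conjg a d'^-1) = 0) by (rewrite phi_conjg, phiV; lia).
  rewrite !commgE, invMg, conjMg, !mulgA.
  rewrite (ker_abelian HA' HA), <- (mulgA _ (conjg a d'^-1) d), (ker_abelian HA' Hd).
  rewrite mulgA. reflexivity.
Qed.

Lemma comm_a_ker1 : comm_a_ker e.
Proof.
  exists e. split; [apply phi1 |].
  symmetry. apply commg1_of_commute. rewrite mulg1, mul1g; reflexivity.
Qed.

Lemma comm_a_kerV z : comm_a_ker z -> comm_a_ker z^-1.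
Proof.
  intros [d [Hd ->]]. exists d^-1. split; [rewrite phiV; lia |].
  apply invg_unique. rewrite <- comm_a_mul, mulgV by (rewrite ?phiV; lia).
  apply commg1_of_commute. rewrite mulg1, mul1g; reflexivity.
Qed.

Lemma comm_a_kerM z w : comm_a_ker z -> comm_a_ker w -> comm_a_ker (z * w).
Proof.
  intros [d [Hd ->]] [d' [Hd' ->]]. exists (d * d').
  split; [rewrite Hphi; lia | symmetry; apply comm_a_mul; assumption].
Qed.

Lemma comm_a_ker_conjg g z : comm_a_ker z -> comm_a_ker (conjg g z).
Proof.
  intros [d [Hd ->]]. exists (conjg g d). split; [rewrite phi_conjg; exact Hd |].
  rewrite !commgE, conjMg, conjg_conjg_a, (conjVg g d); [reflexivity |].
  rewrite phiV; lia.
Qed.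

Lemma comm_a_ker_commMa x y :
  comm_a_ker [~ x, a] -> (comm_a_ker [~ x, y] <-> comm_a_ker [~ x, y * a]).
Proof.
  intro Hxa. rewrite commgMr. split; intro H.
  - apply comm_a_kerM; [exact Hxa | apply comm_a_ker_conjg; exact H].
  - rewrite <- (conjgK a [~ x, y]). apply comm_a_ker_conjg.
    rewrite <- (mulKg [~ x, a] (conjg a [~ x, y])).
    apply comm_a_kerM; [apply comm_a_kerV |]; assumption.
Qed.

Lemma comm_a_ker_comm_of_gens x :
  comm_a_ker [~ x, a] -> (forall d, phi d = 0 -> comm_a_ker [~ x, d]) ->
  forall y, comm_a_ker [~ x, y].
Proof. intros Hxa Hxker. apply phi_ind; [exact Hxker |]. intro y. apply comm_a_ker_commMa, Hxa. Qed.

Lemma comm_a_ker_comm_a y : comm_a_ker [~ a, y].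
Proof.
  apply comm_a_ker_comm_of_gens; [rewrite commgg; apply comm_a_ker1 |].
  intros d Hd. exists d; auto.
Qed.

Lemma comm_a_ker_comm_ker d y : phi d = 0 -> comm_a_ker [~ d, y].
Proof.
  intro Hd. apply comm_a_ker_comm_of_gens.
  - rewrite <- invg_comm. apply comm_a_kerV. exists d; auto.
  - intros d' Hd'. rewrite commg1_of_commute by auto. apply comm_a_ker1.
Qed.

Lemma comm_a_ker_comm x y : comm_a_ker [~ x, y].
Proof.
  rewrite <- invg_comm. apply comm_a_kerV. revert x. apply comm_a_ker_comm_of_gens.
  - rewrite <- invg_comm. apply comm_a_kerV, comm_a_ker_comm_a.
  - intros d Hd. rewrite <- invg_comm. apply comm_a_kerV, comm_a_ker_comm_ker, Hd.
Qed.

Lemma derived1_comm_a_ker z : derived1 mul e inv z -> comm_a_ker z.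
Proof.
  induction 1 as [z [x [y [_ [_ ->]]]] | | | ].
  - apply comm_a_ker_comm.
  - apply comm_a_ker1.
  - apply comm_a_kerM; assumption.
  - apply comm_a_kerV; assumption.
Qed.

End HomToZ.
End Group.

Theorem lemma3p3 (G : Type) (mul : G -> G -> G) (e : G) (inv : G -> G)
  (HG : is_group mul e inv)
  (Hmeta : metabelian mul e inv)
  (phi : G -> Z)
  (Hphi : hom_to_Z mul phi)
  (Hsurj : forall n : Z, exists g : G, phi g = n)
  (Hker : forall g : G, phi g = 0 <-> derived1 mul e inv g)
  (a b : G)
  (Hgen : phi a = 1 \/ phi a = -1)
  (Hab : phi a = phi b) :
  conjugate mul inv a b.
Proof.
  assert (ker_abelian : forall x y, phi x = 0 -> phi y = 0 -> mul x y = mul y x).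
  { intros x y Hx Hy. apply (derived1_commute HG Hmeta); apply Hker; assumption. }
  assert (Hab' : derived1 mul e inv (mul (inv a) b)).
  { apply Hker. rewrite Hphi, (phiV HG Hphi). lia. }
  destruct (derived1_comm_a_ker HG Hphi a Hgen ker_abelian Hab') as [d [_ Hd]].
  exists d. rewrite <- (mulKVg HG a b), Hd, <- (conjg_mulR HG).
  unfold conjg. apply (grp_assoc HG).
Qed.
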